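(* Let $(Q,\star)$ be a left-non-degenerate weak RC-system on a quiver $Q$ over $\Lambda$. Then its completion $(\hat Q,\hat\star)$ is a unital weak RC-system, whose unit family is the family $\{\epsilon_\lambda\}_{\lambda\in\Lambda}$ of inserted loops.
   Context: A weak RC-system $(Q,\star)$ is a quiver with partial operation such that: $x\star y$ defined only if $\mathfrak{s}(x)=\mathfrak{s}(y)$; if $x\star y$ is defined then $y\star x$ is defined, $\mathfrak{s}(x\star y)=\mathfrak{t}(x)$, $\mathfrak{s}(y\star x)=\mathfrak{t}(y)$, $\mathfrak{t}(x\star y)=\mathfrak{t}(y\star x)$; and if $x\star y$, $x\star z$, $(x\star y)\star(x\star z)$ are defined then $y\star z$, $(y\star x)\star(y\star z)$ are defined and $(x\star y)\star(x\star z)=(y\star x)\star(y\star z)$. Left-non-degenerate: each $x\star\cdot\colon Q(\mathfrak{s}(x),\Lambda)\to Q(\mathfrak{t}(x),\Lambda)$ is a bijection. The completion $(\hat Q,\hat\star)$: $\hat Q=Q\cup\{\epsilon_\lambda\mid\lambda\in\Lambda\}$ with new loops $\epsilon_\lambda\colon\lambda\to\lambda$ not in $Q$, and $\epsilon_{\mathfrak{s}(y)}\hat\star y:=y$, $x\hat\star\epsilon_{\mathfrak{s}(x)}:=\epsilon_{\mathfrak{t}(x)}$, $x\hat\star x:=\epsilon_{\mathfrak{t}(x)}$, $x\hat\star y:=x\star y$ in all remaining cases. A unit family of a weak RC-system is a family of loops $\epsilon_\lambda\in Q(\lambda,\lambda)$ such that, for all $x$, $x\star\epsilon_{\mathfrak{s}(x)}=\epsilon_{\mathfrak{t}(x)}$,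 $\epsilon_{\mathfrak{s}(x)}\star x=x$ and $x\star x=\epsilon_{\mathfrak{t}(x)}$ (all defined). The system is unital if it has a unit family and for all $x,y$ with common target $\mu$, $x\star y=y\star x=\epsilon_\mu$ implies $x=y$. *)

From Stdlib Require Import ClassicalEpsilon.

Definition weak_RC {V A : Type} (s t : A -> V) (op : A -> A -> option A) : Prop :=
  (forall x y xy, op x y = Some xy -> s x = s y) /\
  (forall x y xy, op x y = Some xy ->
     exists yx, op y x = Some yx /\ s xy = t x /\ s yx = t y /\ t xy = t yx) /\
  (forall x y z xy xz w,
     op x y = Some xy -> op x z = Some xz -> op xy xz = Some w ->
     exists yx yz, op y x = Some yx /\ op y z = Some yz /\ op yx yz = Some w).

Definition left_nondegenerate {V A : Type} (s t : A -> V) (op : A -> A -> option A)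
  : Prop :=
  forall x,
    (forall y, s y = s x -> exists z, op x y = Some z /\ s z = t x) /\
    (forall y1 y2 z, s y1 = s x -> s y2 = s x ->
        op x y1 = Some z -> op x y2 = Some z -> y1 = y2) /\
    (forall z, s z = t x -> exists y, s y = s x /\ op x y = Some z).

Definition unit_family {V A : Type} (s t : A -> V) (op : A -> A -> option A)
  (eps : V -> A) : Prop :=
  (forall l, s (eps l) = l /\ t (eps l) = l) /\
  (forall x, op x (eps (s x)) = Some (eps (t x))) /\
  (forall x, op (eps (s x)) x = Some x) /\
  (forall x, op x x = Some (eps (t x))).

Definition unital_with {V A : Type} (s t : A -> V) (op : A -> A -> option A)
  (eps : V -> A) : Prop :=
  weak_RC s t op /\ unit_family s t op eps /\
  (forall x y, t x = t y ->
     op x y = Some (eps (t x)) -> op y x = Some (eps (t x)) -> x = y).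

(* The completion: hat Q = Q + Lambda, inr l being the new loop eps_l. *)
Definition hat_src {V A : Type} (s : A -> V) (u : A + V) : V :=
  match u with inl x => s x | inr l => l end.

Definition hat_tgt {V A : Type} (t : A -> V) (u : A + V) : V :=
  match u with inl x => t x | inr l => l end.

Definition hat_eps {V A : Type} (l : V) : A + V := inr l.

Definition hat_op {V A : Type} (s t : A -> V) (op : A -> A -> option A)
  (u v : A + V) : option (A + V) :=
  match u, v with
  | inr l, _ =>
      if excluded_middle_informative (hat_src s v = l) then Some v else None
  | inl x, inr l =>
      if excluded_middle_informative (l = s x) then Some (inr (t x)) else None
  | inl x, inl y =>
      if excluded_middle_informative (x = y) then Some (inr (t x))
      else option_map inl (op x y)
  end.

(** In any quiver with a partial operation satisfying the first two axioms of a
    weak RC-system and admitting a unit family, the RC law holds automatically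
    for every triple (x, y, z) in which one entry is a unit or two entries
    coincide.  In the completion the only remaining triples are three distinct
    arrows of Q, on which the completed operation is the original one, except
    that a product (x * y) * (x * z) with x * y = x * z is sent to a unit.
    Injectivity of x * _ (part of left-non-degeneracy) excludes this on both
    sides of the RC law, so the RC law of Q transfers. *)

From Stdlib Require Import ClassicalEpsilon.

Definition rc_law {A : Type} (op : A -> A -> option A) (x y z : A) : Prop :=
  forall xy xz w,
    op x y = Some xy -> op x z = Some xz -> op xy xz = Some w ->
    exists yx yz, op y x = Some yx /\ op y z = Some yz /\ op yx yz = Some w.

Definition left_cancellative {A : Type} (op : A -> A -> option A) : Prop :=
  forall x y1 y2 z, op x y1 = Some z -> op x y2 = Some z -> y1 = y2.

Lemma left_nondegenerate_cancellative (V A : Type) (s t : A -> V)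
    (op : A -> A -> option A) :
  (forall x y xy, op x y = Some xy -> s x = s y) ->
  left_nondegenerate s t op -> left_cancellative op.
Proof.
  intros op_src nd x y1 y2 z H1 H2.
  destruct (nd x) as (_ & inj & _).
  apply (inj y1 y2 z); auto; symmetry; eauto.
Qed.

Section UnitFamily.
Context {V A : Type} {s t : A -> V} {op : A -> A -> option A} {eps : V -> A}.
Hypothesis op_src : forall x y xy, op x y = Some xy -> s x = s y.
Hypothesis op_swap : forall x y xy, op x y = Some xy ->
  exists yx, op y x = Some yx /\ s xy = t x /\ s yx = t y /\ t xy = t yx.
Hypothesis units : unit_family s t op eps.

Lemma eps_src l : s (eps l) = l.
Proof. apply units. Qed.

Lemma op_eps_r x : op x (eps (s x)) = Some (eps (t x)).
Proof. apply units. Qed.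

Lemma op_eps_l x : op (eps (s x)) x = Some x.
Proof. apply units. Qed.

Lemma op_diag x : op x x = Some (eps (t x)).
Proof. apply units. Qed.

Lemma op_eps_l_inv l v a : op (eps l) v = Some a -> l = s v /\ a = v.
Proof.
  intros H.
  assert (Hl : l = s v) by (rewrite <- (eps_src l); exact (op_src _ _ _ H)).
  subst l. rewrite op_eps_l in H. split; congruence.
Qed.

Lemma op_eps_r_inv u l a : op u (eps l) = Some a -> l = s u /\ a = eps (t u).
Proof.
  intros H.
  assert (Hl : l = s u) by (rewrite <- (eps_src l); symmetry; exact (op_src _ _ _ H)).
  subst l. rewrite op_eps_r in H. split; congruence.
Qed.

Lemma op_diag_inv u a : op u u = Some a -> a = eps (t u).
Proof. rewrite op_diag. congruence. Qed.

Lemma rc_law_unit_l l v w : rc_law op (eps l) v w.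
Proof.
  intros a b c Ha Hb Hc.
  apply op_eps_l_inv in Ha as [-> ->]. apply op_eps_l_inv in Hb as [_ ->].
  destruct (op_swap _ _ _ Hc) as (_ & _ & Hsc & _).
  exists (eps (t v)), c. split; [apply op_eps_r | split; [exact Hc |]].
  rewrite <- Hsc. apply op_eps_l.
Qed.

Lemma rc_law_unit_m u l w : rc_law op u (eps l) w.
Proof.
  intros a b c Ha Hb Hc.
  apply op_eps_r_inv in Ha as [-> ->]. apply op_eps_l_inv in Hc as [_ ->].
  exists u, w. split; [apply op_eps_l | split; [| exact Hb]].
  rewrite (op_src _ _ _ Hb). apply op_eps_l.
Qed.

Lemma rc_law_unit_r u v l : rc_law op u v (eps l).
Proof.
  intros a b c Ha Hb Hc.
  apply op_eps_r_inv in Hb as [-> ->].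
  destruct (op_swap _ _ _ Ha) as (e & He & Hsa & Hse & Hte).
  rewrite <- Hsa in Hc. apply op_eps_r_inv in Hc as [_ ->].
  exists e, (eps (t v)). split; [exact He | split].
  - rewrite (op_src _ _ _ Ha). apply op_eps_r.
  - rewrite <- Hse, op_eps_r, Hte. reflexivity.
Qed.

Lemma rc_law_diag_m u w : rc_law op u u w.
Proof.
  intros a b c Ha Hb Hc.
  apply op_diag_inv in Ha as ->.
  exists (eps (t u)), b. split; [apply op_diag | split; assumption].
Qed.

Lemma rc_law_diag_r u v : rc_law op u v u.
Proof.
  intros a b c Ha Hb Hc.
  apply op_diag_inv in Hb as ->.
  destruct (op_swap _ _ _ Ha) as (e & He & Hsa & _ & Hte).
  rewrite <- Hsa in Hc. apply op_eps_r_inv in Hc as [_ ->].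
  exists e, e. split; [exact He | split; [exact He |]].
  rewrite op_diag, Hte. reflexivity.
Qed.

Lemma rc_law_diag_mr u v : rc_law op u v v.
Proof.
  intros a b c Ha Hb Hc.
  assert (b = a) as -> by congruence.
  apply op_diag_inv in Hc as ->.
  destruct (op_swap _ _ _ Ha) as (e & He & _ & Hse & Hte).
  exists e, (eps (t v)). split; [exact He | split; [apply op_diag |]].
  rewrite <- Hse, op_eps_r, Hte. reflexivity.
Qed.

End UnitFamily.

Section Completion.
Variables (V A : Type) (s t : A -> V) (op : A -> A -> option A).

Local Notation hsrc := (hat_src s).
Local Notation htgt := (hat_tgt t).
Local Notation hop := (hat_op s t op).

Inductive hat_graph : A + V -> A + V -> A + V -> Prop :=
| hat_graph_unit_l v : hat_graph (inr (hsrc v)) v v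
| hat_graph_unit_r x : hat_graph (inl x) (inr (s x)) (inr (t x))
| hat_graph_diag x : hat_graph (inl x) (inl x) (inr (t x))
| hat_graph_op x y xy : x <> y -> op x y = Some xy -> hat_graph (inl x) (inl y) (inl xy).

Lemma hat_opP u v w : hop u v = Some w <-> hat_graph u v w.
Proof.
  split.
  - destruct u as [x|l], v as [y|m]; simpl;
      destruct excluded_middle_informative as [E|N]; intros H; try discriminate.
    + subst y. injection H as <-. apply hat_graph_diag.
    + destruct (op x y) as [xy|] eqn:Exy; [|discriminate].
      injection H as <-. apply hat_graph_op; assumption.
    + subst m. injection H as <-. apply hat_graph_unit_r.
    + subst l. injection H as <-. apply (hat_graph_unit_l (inl y)).
    + subst l. injection H as <-. apply (hat_graph_unit_l (inr m)).
  - intros [? | ? | ? | ? ? ? N Exy]; simpl;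
      destruct excluded_middle_informative; try congruence.
    rewrite Exy. reflexivity.
Qed.

Lemma hat_op_arrows x y : x <> y -> hop (inl x) (inl y) = option_map inl (op x y).
Proof. intros N. simpl. destruct excluded_middle_informative; congruence. Qed.

Lemma hat_unit_family : unit_family hsrc htgt hop (@hat_eps V A).
Proof.
  unfold hat_eps. split; [intros l; split; reflexivity |].
  split; [| split]; intros [x|m]; apply hat_opP.
  - apply hat_graph_unit_r.
  - apply (hat_graph_unit_l (inr m)).
  - apply (hat_graph_unit_l (inl x)).
  - apply (hat_graph_unit_l (inr m)).
  - apply hat_graph_diag.
  - apply (hat_graph_unit_l (inr m)).
Qed.

Lemma hat_op_eps_inj u v l m : hop u v = Some (inr l) -> hop v u = Some (inr m) -> u = v.
Proof.
  intros H1 H2. apply hat_opP in H1, H2.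
  inversion H1; subst; try reflexivity. inversion H2.
Qed.

Hypothesis op_src : forall x y xy, op x y = Some xy -> s x = s y.
Hypothesis op_swap : forall x y xy, op x y = Some xy ->
  exists yx, op y x = Some yx /\ s xy = t x /\ s yx = t y /\ t xy = t yx.
Hypothesis op_rc : forall x y z, rc_law op x y z.
Hypothesis op_cancel : left_cancellative op.

Lemma hat_op_src u v w : hop u v = Some w -> hsrc u = hsrc v.
Proof.
  intros H. apply hat_opP in H. destruct H; simpl; eauto.
Qed.

Lemma hat_op_swap u v w : hop u v = Some w ->
  exists vu, hop v u = Some vu /\ hsrc w = htgt u /\ hsrc vu = htgt v /\
    htgt w = htgt vu.
Proof.
  intros H. apply hat_opP in H. destruct H as [v | x | x | x y xy N Exy].
  - exists (inr (htgt v)). split; [apply hat_unit_family | auto].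
  - exists (inl x). split; [apply (hat_opP _ _ _), (hat_graph_unit_l (inl x)) | auto].
  - exists (inr (t x)). split; [apply hat_unit_family | auto].
  - destruct (op_swap _ _ _ Exy) as (yx & Eyx & H).
    exists (inl yx). split; [apply hat_opP, hat_graph_op; auto | exact H].
Qed.

Lemma hat_rc_law_arrows x y z : x <> y -> x <> z -> y <> z ->
  rc_law hop (inl x) (inl y) (inl z).
Proof.
  intros Nxy Nxz Nyz a b c Ha Hb Hc.
  rewrite hat_op_arrows in Ha, Hb by assumption.
  destruct (op x y) as [xy|] eqn:Exy; [|discriminate]. injection Ha as <-.
  destruct (op x z) as [xz|] eqn:Exz; [|discriminate]. injection Hb as <-.
  assert (Nxyz : xy <> xz) by (intros <-; apply Nyz; eapply op_cancel; eauto).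
  rewrite hat_op_arrows in Hc by exact Nxyz.
  destruct (op xy xz) as [w|] eqn:Ew; [|discriminate]. injection Hc as <-.
  destruct (op_rc _ _ _ _ _ _ Exy Exz Ew) as (yx & yz & Eyx & Eyz & Eyw).
  assert (Nyxz : yx <> yz) by (intros <-; apply Nxz; eapply op_cancel; eauto).
  exists (inl yx), (inl yz).
  rewrite !hat_op_arrows by auto. rewrite Eyx, Eyz, Eyw. auto.
Qed.

Lemma hat_rc_law u v w : rc_law hop u v w.
Proof.
  pose proof hat_op_src as src. pose proof hat_op_swap as swap.
  pose proof hat_unit_family as units.
  destruct u as [x|l]; [| exact (rc_law_unit_l src swap units l v w)].
  destruct v as [y|m]; [| exact (rc_law_unit_m src units _ m w)].
  destruct w as [z|n]; [| exact (rc_law_unit_r src swap units _ _ n)].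
  destruct (excluded_middle_informative (x = y)) as [<-|Nxy];
    [exact (rc_law_diag_m units _ _) |].
  destruct (excluded_middle_informative (x = z)) as [<-|Nxz];
    [exact (rc_law_diag_r src swap units _ _) |].
  destruct (excluded_middle_informative (y = z)) as [<-|Nyz];
    [exact (rc_law_diag_mr swap units _ _) |].
  apply hat_rc_law_arrows; assumption.
Qed.

Lemma hat_weak_RC : weak_RC hsrc htgt hop.
Proof. split; [exact hat_op_src | split; [exact hat_op_swap | exact hat_rc_law]]. Qed.

End Completion.

Theorem lemma3p8 (V A : Type) (s t : A -> V) (op : A -> A -> option A) :
  weak_RC s t op -> left_nondegenerate s t op ->
  unital_with (hat_src s) (hat_tgt t) (hat_op s t op) (@hat_eps V A).
Proof.
  intros [op_src [op_swap op_rc]] nd.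
  pose proof (left_nondegenerate_cancellative V A s t op op_src nd) as op_cancel.
  split; [| split].
  - apply hat_weak_RC; assumption.
  - apply hat_unit_family.
  - intros u v _. apply hat_op_eps_inj.
Qed.
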